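(* For every $n\ge1$, $\mathcal{C}(T^{mb}_n)=c_n$; that is, the maximally balanced tree with $n$ leaves has the minimum Colless index among all bifurcating trees with $n$ leaves.
   Context: Bifurcating trees: rooted trees in which every internal node has exactly two children; $\mathcal{T}_n$ is the set of isomorphism classes of bifurcating trees with $n$ leaves. For a node $w$, $\kappa_T(w)$ is its number of descendant leaves. The Colless index is $\mathcal{C}(T)=\sum_{v}|\kappa_T(v_1)-\kappa_T(v_2)|$, summed over internal nodes $v$ with children $v_1,v_2$; $c_n=\min\{\mathcal{C}(T):T\in\mathcal{T}_n\}$. A bifurcating tree is maximally balanced if for every internal node the numbers of descendant leaves of its two children differ by at most 1; $T^{mb}_n$ denotes the unique maximally balanced tree with $n$ leaves. *)

From mathcomp Require Import all_boot.
Set Implicit Arguments. Unset Strict Implicit. Unset Printing Implicit Defensive.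

(* Trees are represented as plain terms; isomorphism classes are irrelevant
   for the statement since leaf counts and the Colless index are invariant
   under swapping children. *)
Inductive btree : Type :=
| Leaf : btree
| Node : btree -> btree -> btree.

Fixpoint leaves (t : btree) : nat :=
  match t with
  | Leaf => 1
  | Node l r => leaves l + leaves r
  end.

Definition absdiff (a b : nat) : nat := (a - b) + (b - a).

Fixpoint colless (t : btree) : nat :=
  match t with
  | Leaf => 0
  | Node l r => absdiff (leaves l) (leaves r) + colless l + colless r
  end.

Fixpoint max_balanced (t : btree) : bool :=
  match t with
  | Leaf => true
  | Node l r => [&& absdiff (leaves l) (leaves r) <= 1,
                   max_balanced l & max_balanced r]
  end.

(* c_n is the minimum of colless over trees with n leaves; "colless T = c_n"
   for a tree T with n leaves is expressed as: colless T is a lower bound of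
   colless over all trees with n leaves. *)
Definition is_min_colless (n : nat) (T : btree) : Prop :=
  leaves T = n /\ forall T' : btree, leaves T' = n -> colless T <= colless T'.

(* Let bc n be the Colless index of the maximally balanced tree with n leaves;
   it obeys bc 1 = 0 and bc n = (n mod 2) + bc (ceil (n/2)) + bc (floor (n/2)),
   and more generally bc n = |p - q| + bc p + bc q for every split n = p + q
   with |p - q| <= 1 (lemma bc_split).  The heart of the proof is the
   inequality  bc (a + b) <= |a - b| + bc a + bc b  for all a, b
   (lemma bc_le_split), proved by strong induction on a + b: for a >= b >= 2
   halve both a = a1 + a2 and b = b1 + b2 and regroup a + b as the balanced
   split (a1 + b2) + (a2 + b1); the case b = 1 is treated separately.
   By induction on trees this gives bc (leaves T) <= colless T for every tree,
   with equality when T is maximally balanced; together with the existence of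
   a maximally balanced tree of every size this is theorem1. *)
From mathcomp Require Import all_boot.
From mathcomp Require Import zify.

(* bc_fuel k n computes bc n by halving recursion, provided k >= n. *)
Fixpoint bc_fuel (k n : nat) : nat :=
  match k with
  | 0 => 0
  | k'.+1 =>
      if n <= 1 then 0
      else n %% 2 + bc_fuel k' (n - n %/ 2) + bc_fuel k' (n %/ 2)
  end.

Lemma bc_fuel_stable k k' n : n <= k -> n <= k' -> bc_fuel k n = bc_fuel k' n.
Proof.
elim: k k' n => [|k IH] [|k'] n /= Hk Hk' //.
- by have -> : n = 0 by lia.
- by have -> : n = 0 by lia.
- case: ifP => // /negbT Hn2.
  rewrite (IH k' (n - n %/ 2)); try lia.
  by rewrite (IH k' (n %/ 2)); lia.
Qed.

(* The Colless index of the maximally balanced tree with n leaves. *)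
Definition bc (n : nat) : nat := bc_fuel n n.

Lemma bc1 : bc 1 = 0. Proof. by []. Qed.

Lemma bc_rec n : 2 <= n -> bc n = n %% 2 + bc (n - n %/ 2) + bc (n %/ 2).
Proof.
case: n => [|n] Hn //; rewrite /bc /=.
have -> : (n.+1 <= 1) = false by lia.
rewrite (@bc_fuel_stable n (n.+1 - n.+1 %/ 2)); try lia.
by rewrite (@bc_fuel_stable n (n.+1 %/ 2)); lia.
Qed.

(* Every split of n into two parts differing by at most one is the halving
   split up to order, so bc obeys the recursion along it. *)
Lemma bc_split n p q : 2 <= n -> p + q = n -> absdiff p q <= 1 ->
  bc n = absdiff p q + bc p + bc q.
Proof.
move=> Hn Hpq; rewrite /absdiff => Hd; rewrite (@bc_rec n Hn).
have [[-> ->]|[-> ->]] :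
  (p = n - n %/ 2 /\ q = n %/ 2) \/ (q = n - n %/ 2 /\ p = n %/ 2) by lia.
all: lia.
Qed.

Section InductionStep.

Variable n : nat.
Hypothesis IH : forall m, m < n ->
  forall a b, a + b = m -> bc m <= absdiff a b + bc a + bc b.

(* Adding a single leaf: compare a + 1 and a through their halves, using
   the induction hypothesis on (floor (a/2)) + 1. *)
Lemma bc_step_one a : a + 1 = n -> 2 <= a ->
  bc n <= absdiff a 1 + bc a + bc 1.
Proof.
move=> Hn Ha; set k := a %/ 2; rewrite bc1 /absdiff.
have IHk := IH (k.+1) ltac:(lia) k 1 ltac:(lia).
rewrite /absdiff bc1 in IHk.
have [Heven|Hodd] : a = 2 * k \/ a = 2 * k + 1 by lia.
- have En := @bc_split n k.+1 k ltac:(lia) ltac:(lia) ltac:(rewrite /absdiff; lia).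
  have Ea := @bc_split a k k ltac:(lia) ltac:(lia) ltac:(rewrite /absdiff; lia).
  rewrite /absdiff in En Ea; lia.
- have En := @bc_split n k.+1 k.+1 ltac:(lia) ltac:(lia) ltac:(rewrite /absdiff; lia).
  have Ea := @bc_split a k.+1 k ltac:(lia) ltac:(lia) ltac:(rewrite /absdiff; lia).
  rewrite /absdiff in En Ea; lia.
Qed.

(* Halve a = a1 + a2 and b = b1 + b2 (a1 >= a2, b1 >= b2); then
   (a1 + b2) + (a2 + b1) is a balanced split of n, and the induction
   hypothesis applies to both of its parts. *)
Lemma bc_step_halving a b : a + b = n -> 2 <= b <= a ->
  bc n <= absdiff a b + bc a + bc b.
Proof.
move=> Hn Hb.
set a1 := a - a %/ 2; set a2 := a %/ 2; set b1 := b - b %/ 2; set b2 := b %/ 2.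
have Ea := @bc_split a a1 a2 ltac:(lia) ltac:(lia) ltac:(rewrite /absdiff; lia).
have Eb := @bc_split b b1 b2 ltac:(lia) ltac:(lia) ltac:(rewrite /absdiff; lia).
have En := @bc_split n (a1 + b2) (a2 + b1)
  ltac:(lia) ltac:(lia) ltac:(rewrite /absdiff; lia).
have I1 := IH (a1 + b2) ltac:(lia) a1 b2 erefl.
have I2 := IH (a2 + b1) ltac:(lia) a2 b1 erefl.
rewrite /absdiff in Ea Eb En I1 I2 *; lia.
Qed.

End InductionStep.

Lemma bc_le_split a b : bc (a + b) <= absdiff a b + bc a + bc b.
Proof.
have [n Hn] : exists n, a + b = n by exists (a + b).
rewrite Hn; elim/ltn_ind: n a b Hn => n IH.
have sorted_case a b : a + b = n -> b <= a -> bc n <= absdiff a b + bc a + bc b.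
  move=> Hab Hba.
  have [Hb0|[Hb1|Hb2]] : b = 0 \/ b = 1 \/ 2 <= b by lia.
  - by subst b; rewrite -Hab addn0 /absdiff; lia.
  - subst b; have [Ha1|Ha2] : a = 1 \/ 2 <= a by lia.
    + by subst a n; rewrite (@bc_rec 2).
    + exact: (@bc_step_one n IH).
  - by apply: (@bc_step_halving n IH) => //; lia.
move=> a b Hab.
have [Hba|Hab'] := leqP b a; first exact: sorted_case.
have := sorted_case b a ltac:(lia) ltac:(lia); rewrite /absdiff; lia.
Qed.

Lemma leaves_pos T : 1 <= leaves T.
Proof. by elim: T => //= l Hl r Hr; lia. Qed.

Lemma bc_le_colless T : bc (leaves T) <= colless T.
Proof.
elim: T => [|l IHl r IHr] //=.
have := bc_le_split (leaves l) (leaves r); lia.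
Qed.

Lemma colless_max_balanced T : max_balanced T -> colless T = bc (leaves T).
Proof.
elim: T => [|l IHl r IHr] //= /and3P [Hd Hl Hr].
have := leaves_pos l; have := leaves_pos r => Hr1 Hl1.
by rewrite IHl // IHr // (@bc_split (leaves l + leaves r) (leaves l) (leaves r)) //; lia.
Qed.

(* A maximally balanced tree with n leaves exists for every n >= 1: join
   those with ceil (n/2) and floor (n/2) leaves. *)
Lemma max_balanced_exists n : 1 <= n -> exists T, leaves T = n /\ max_balanced T.
Proof.
elim/ltn_ind: n => n IH Hn.
have [->|Hn2] : n = 1 \/ 2 <= n by lia.
  by exists Leaf.
have [T1 [E1 B1]] := IH (n - n %/ 2) ltac:(lia) ltac:(lia).
have [T2 [E2 B2]] := IH (n %/ 2) ltac:(lia) ltac:(lia).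
exists (Node T1 T2); rewrite /= E1 E2 B1 B2 /absdiff andbT; split; lia.
Qed.

Theorem theorem1 (n : nat) (hn : 1 <= n) :
  (exists T : btree, leaves T = n /\ max_balanced T) /\
  (forall T : btree, leaves T = n -> max_balanced T -> is_min_colless n T).
Proof.
split; first exact: max_balanced_exists.
move=> T HT HB; split => // T' HT'.
by rewrite (@colless_max_balanced T HB) HT -HT'; apply: bc_le_colless.
Qed.
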